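(* Let $A=(A,\wedge,\vee,\cdot,\to,1)$ be a $\mathsf{DLCMI}$, $a,b\in A$, and $(c,d),(u,w)\in R(a,b)$. Then there are natural numbers $n,k$ such that: 1) $t_n^{2k}(a,b)\cdot(c\to u)\le d\to w$; 2) $t_n^{2k}(a,b)\cdot((c\to u)\wedge a\wedge b)\le (d\to w)\wedge a\wedge b$; 3) $t_n^{2k}(a,b)\cdot((d\to w)\wedge a\wedge b)\le (c\to u)\wedge a\wedge b$; 4) $t_n^{2k}(a,b)\cdot((c\to u)\vee a\vee b)\le (d\to w)\vee a\vee b$; 5) $t_n^{2k}(a,b)\cdot((d\to w)\vee a\vee b)\le (c\to u)\vee a\vee b$; 6) $t_{n+1}^{2k}(a,b)\le (c\to u)\leftrightarrow(d\to w)$.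
   Context: An algebra $(A,\wedge,\vee,\cdot,\to,1)$ of type $(2,2,2,2,0)$ is a $\mathsf{DLCMI}$ if for all $a,b,c\in A$: (1) $(A,\wedge,\vee)$ is a distributive lattice; (2) $1$ is its largest element; (3) $(A,\cdot,1)$ is a commutative monoid; (4) $(a\to b)\wedge(a\to c)=a\to(b\wedge c)$; (5) $(a\to c)\wedge(b\to c)=(a\vee b)\to c$; (6) $a\to a=1$; (7) $(a\vee b)\cdot c=(a\cdot c)\vee(b\cdot c)$; (8) $(a\to b)\cdot(b\to c)\le a\to c$; (9) $a\to b\le (a\cdot c)\to(b\cdot c)$. Notation: $x^0=1$, $x^{m}=x\cdot x^{m-1}$; $\square(x)=1\to x$, $\square^0(x)=x$, $\square^{m}$ the $m$-fold iterate; $x\leftrightarrow y=(x\to y)\wedge(y\to x)$; $t_n(a,b)=\square^0(a\leftrightarrow b)\wedge\square(a\leftrightarrow b)\wedge\cdots\wedge\square^n(a\leftrightarrow b)$; $t_n^k(a,b)=(t_n(a,b))^k$. $R(a,b)$ is the binary relation on $A$ with $(c,d)\in R(a,b)$ iff there exist natural numbers $n,k$ such that (C1) $t_n^k(a,b)\cdot(c\wedge a\wedge b)\le d\wedge a\wedge b$ and $t_n^k(a,b)\cdot(d\wedge a\wedge b)\le c\wedge a\wedge b$; (C2) $t_n^k(a,b)\cdot(c\vee a\vee b)\le d\vee a\vee b$ and $t_n^k(a,b)\cdot(d\vee a\vee b)\le c\vee a\vee b$; (C3) $t_n^k(a,b)\le c\leftrightarrow d$. *)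

From mathcomp Require Import all_boot all_order.
Set Implicit Arguments. Unset Strict Implicit. Unset Printing Implicit Defensive.
Import Order.TTheory.
Local Open Scope order_scope.

(* A DLCMI: the lattice reduct (A, meet, join) is a mathcomp distributive
   lattice; the order <= is the lattice order. The remaining operations are
   explicit. *)
Record DLCMI_axioms (disp : Order.disp_t) (A : distrLatticeType disp)
    (mul imp : A -> A -> A) (one : A) : Prop := {
  dlcmi_top   : forall a : A, a <= one;
  dlcmi_mulA  : forall a b c : A, mul a (mul b c) = mul (mul a b) c;
  dlcmi_mulC  : forall a b : A, mul a b = mul b a;
  dlcmi_mul1  : forall a : A, mul one a = a;
  dlcmi_impM  : forall a b c : A, imp a b `&` imp a c = imp a (b `&` c);
  dlcmi_impJ  : forall a b c : A, imp a c `&` imp b c = imp (a `|` b) c;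
  dlcmi_impxx : forall a : A, imp a a = one;
  dlcmi_mulJ  : forall a b c : A, mul (a `|` b) c = mul a c `|` mul b c;
  dlcmi_trans : forall a b c : A, mul (imp a b) (imp b c) <= imp a c;
  dlcmi_mono  : forall a b c : A, imp a b <= imp (mul a c) (mul b c)
}.

Section Ops.
Context {disp : Order.disp_t} {A : distrLatticeType disp}
        (mul imp : A -> A -> A) (one : A).

Definition dpow (x : A) (m : nat) : A := iter m (mul x) one.
Definition dbox (x : A) : A := imp one x.
Definition dboxn (m : nat) (x : A) : A := iter m dbox x.
Definition dbiimp (x y : A) : A := imp x y `&` imp y x.
Fixpoint dt (n : nat) (a b : A) : A :=
  match n with
  | 0 => dboxn 0 (dbiimp a b)
  | n'.+1 => dt n' a b `&` dboxn n'.+1 (dbiimp a b)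
  end.
Definition dtk (n k : nat) (a b : A) : A := dpow (dt n a b) k.

Definition inR (a b c e : A) : Prop :=
  exists n k : nat,
    [/\ mul (dtk n k a b) (c `&` a `&` b) <= e `&` a `&` b,
        mul (dtk n k a b) (e `&` a `&` b) <= c `&` a `&` b,
        mul (dtk n k a b) (c `|` a `|` b) <= e `|` a `|` b,
        mul (dtk n k a b) (e `|` a `|` b) <= c `|` a `|` b
      & dtk n k a b <= dbiimp c e].
End Ops.

From mathcomp Require Import all_boot all_order.
Import Order.TTheory.
Set Implicit Arguments. Unset Strict Implicit.
Local Open Scope order_scope.

(* Only condition (C3) of R(a,b) matters.  If s := t_n^k(a,b) lies below both
   c <-> d and u <-> w, then the transitivity axiom (8) gives
   s * s * (c -> u) <= (d -> c) * (c -> u) * (u -> w) <= d -> w, and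
   s * s = t_n^{2k}(a,b); the inequalities with a and b follow because
   multiplication is decreasing.  For 6), box is submultiplicative and
   t_{n+1} <= box t_n, so t_{n+1}^{2k} <= box (s * s), while axiom (9) with
   the factor 1 gives box x <= y -> x * y for every y. *)

Section DLCMITheory.

Variables (disp : Order.disp_t) (A : distrLatticeType disp).
Variables (mul imp : A -> A -> A) (one : A).
Hypothesis HA : DLCMI_axioms mul imp one.

Local Notation pow := (dpow mul one).
Local Notation box := (dbox imp one).
Local Notation biimp := (dbiimp imp).

Let mulA := dlcmi_mulA HA.
Let mulC := dlcmi_mulC HA.
Let mul1 := dlcmi_mul1 HA.

Lemma le_mul2r (x y z : A) : x <= y -> mul x z <= mul y z.
Proof. by move=> /join_r <-; rewrite (dlcmi_mulJ HA) leUl. Qed.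

Lemma le_mul2l (x y z : A) : x <= y -> mul z x <= mul z y.
Proof. by move=> le_xy; rewrite ![mul z _]mulC le_mul2r. Qed.

Lemma le_mul (x y z t : A) : x <= y -> z <= t -> mul x z <= mul y t.
Proof. by move=> le_xy le_zt; apply: le_trans (le_mul2r z le_xy) (le_mul2l y le_zt). Qed.

Lemma leMr (x y : A) : mul x y <= y.
Proof. by rewrite -{2}[y]mul1 le_mul2r ?(dlcmi_top HA). Qed.

Lemma le_imp2l (x y z : A) : y <= z -> imp x y <= imp x z.
Proof. by move=> /meet_l <-; rewrite -(dlcmi_impM HA) leIr. Qed.

Lemma box_le_imp_mul (x y : A) : box x <= imp y (mul x y).
Proof. by have := dlcmi_mono HA one x y; rewrite mul1. Qed.

Lemma box_le_imp (x y z : A) : mul x y <= z -> box x <= imp y z.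
Proof. by move=> le_xyz; apply: le_trans (box_le_imp_mul x y) (le_imp2l _ le_xyz). Qed.

Lemma box_mul (x y : A) : mul (box x) (box y) <= box (mul x y).
Proof.
apply: le_trans (dlcmi_trans HA one y (mul x y)).
by rewrite mulC le_mul2l // -[y in imp y]mul1 (dlcmi_mono HA).
Qed.

Lemma mul_imp_chain (x y c d u w : A) :
  x <= imp d c -> y <= imp u w -> mul (mul x y) (imp c u) <= imp d w.
Proof.
move=> le_x le_y; rewrite -mulA [mul y _]mulC mulA.
apply: le_trans (le_mul (le_mul le_x (lexx _)) le_y) _.
exact: le_trans (le_mul2r _ (dlcmi_trans HA _ _ _)) (dlcmi_trans HA _ _ _).
Qed.

Lemma le_mul_meetr (x y z t : A) : mul t x <= y -> mul t (x `&` z) <= y `&` z.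
Proof.
move=> le_txy; rewrite lexI (le_trans (leMr _ _) (leIr _ _)) andbT.
exact: le_trans (le_mul2l _ (leIl _ _)) le_txy.
Qed.

Lemma le_mul_joinr (x y z t : A) : mul t x <= y -> mul t (x `|` z) <= y `|` z.
Proof. by move=> le_txy; rewrite mulC (dlcmi_mulJ HA) leU2 // mulC ?leMr. Qed.

Lemma dpowD (x : A) (i j : nat) : pow x (i + j) = mul (pow x i) (pow x j).
Proof. by elim: i => [|i IH]; rewrite ?mul1 // addSn /dpow !iterS -/(dpow _ _ _ _) IH mulA. Qed.

Lemma le_dpow (x y : A) (k : nat) : x <= y -> pow x k <= pow y k.
Proof. by move=> le_xy; elim: k => [|k IH] //; rewrite /dpow !iterS le_mul. Qed.

Lemma dpow_le_exp (x : A) (i j : nat) : (j <= i)%N -> pow x i <= pow x j.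
Proof.
move=> /subnK <-; elim: (i - j)%N => [|m IH] //.
by rewrite addSn /dpow iterS (le_trans (leMr _ _) IH).
Qed.

Lemma dpow_box (x : A) (k : nat) : pow (box x) k <= box (pow x k).
Proof.
elim: k => [|k IH]; first by rewrite /= /dbox (dlcmi_impxx HA).
by rewrite /dpow !iterS (le_trans (le_mul2l _ IH) (box_mul _ _)).
Qed.

Lemma dt_le (a b : A) (m n : nat) : (m <= n)%N -> dt imp one n a b <= dt imp one m a b.
Proof.
move=> /subnK <-; elim: (n - m)%N => [|j IH] //.
by rewrite addSn (le_trans (leIl _ _) IH).
Qed.

Lemma dtS_le_box (a b : A) (n : nat) : dt imp one n.+1 a b <= box (dt imp one n a b).
Proof.
elim: n => [|n IH]; first exact: leIr.
rewrite [dt _ _ n.+2 a b]/= [dt _ _ n.+1 a b]/= /dbox -(dlcmi_impM HA).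
by rewrite leI2 // /dboxn iterS.
Qed.

Lemma dtk_le (a b : A) (m n i j : nat) :
  (m <= n)%N -> (i <= j)%N -> dtk mul imp one n j a b <= dtk mul imp one m i a b.
Proof. by move=> le_mn le_ij; rewrite (le_trans (dpow_le_exp _ le_ij)) ?le_dpow ?dt_le. Qed.

Lemma dtk_double (a b : A) (n k : nat) :
  dtk mul imp one n (2 * k) a b = mul (dtk mul imp one n k a b) (dtk mul imp one n k a b).
Proof. by rewrite /dtk mul2n -addnn dpowD. Qed.

Lemma dtkS_le_box (a b : A) (n k : nat) :
  dtk mul imp one n.+1 k a b <= box (dtk mul imp one n k a b).
Proof. exact: le_trans (le_dpow _ (dtS_le_box _ _ _)) (dpow_box _ _). Qed.

Lemma inR_biimp (a b c d : A) : inR mul imp one a b c d ->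
  exists n k, forall m j, (n <= m)%N -> (k <= j)%N ->
    dtk mul imp one m j a b <= biimp c d.
Proof.
move=> [n [k [_ _ _ _ le_cd]]]; exists n, k => m j le_nm le_kj.
exact: le_trans (dtk_le _ _ le_nm le_kj) le_cd.
Qed.

End DLCMITheory.

Theorem lemma3p8 (disp : Order.disp_t) (A : distrLatticeType disp)
    (mul imp : A -> A -> A) (one : A) :
  DLCMI_axioms mul imp one ->
  forall a b c d u w : A,
    inR mul imp one a b c d -> inR mul imp one a b u w ->
    exists n k : nat,
      mul (dtk mul imp one n (2 * k)%N a b) (imp c u) <= imp d w /\
          mul (dtk mul imp one n (2 * k)%N a b) (imp c u `&` a `&` b)
            <= imp d w `&` a `&` b /\
          mul (dtk mul imp one n (2 * k)%N a b) (imp d w `&` a `&` b)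
            <= imp c u `&` a `&` b /\
          mul (dtk mul imp one n (2 * k)%N a b) (imp c u `|` a `|` b)
            <= imp d w `|` a `|` b /\
          mul (dtk mul imp one n (2 * k)%N a b) (imp d w `|` a `|` b)
            <= imp c u `|` a `|` b /\
          dtk mul imp one n.+1 (2 * k)%N a b <= dbiimp imp (imp c u) (imp d w).
Proof.
move=> HA a b c d u w /(inR_biimp HA)[n1 [k1 Hcd]] /(inR_biimp HA)[n2 [k2 Huw]].
set n := maxn n1 n2; set k := maxn k1 k2.
have := Hcd n k (leq_maxl _ _) (leq_maxl _ _).
have := Huw n k (leq_maxr _ _) (leq_maxr _ _).
rewrite /dbiimp !lexI => /andP[s_uw s_wu] /andP[s_cd s_dc].
have fwd := mul_imp_chain HA s_dc s_uw; have bwd := mul_imp_chain HA s_cd s_wu.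
rewrite -(dtk_double HA) in fwd bwd.
exists n, k; split; first exact: fwd.
do 2 (split; first by do 2 apply: (le_mul_meetr HA)).
do 2 (split; first by do 2 apply: (le_mul_joinr HA)).
rewrite (le_trans (dtkS_le_box HA _ _ _ _)) // /dbiimp lexI.
by rewrite !(box_le_imp HA).
Qed.
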